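(* Let $n$ be a nonnegative integer and let $q$, $a$, $z$ be indeterminates (equivalently, generic complex numbers such that no denominator below vanishes), with $a^{1/2}$ a fixed square root of $a$. Then the following two identities hold: \[ \frac{(q^{z+2};q^2)_n\,(a^{-1}q^{2-z};q^2)_n}{(q;q^2)_n\,(a^{-1}q^3;q^2)_n} =\sum_{k=0}^n \frac{(q^{-n};q)_k\,(-q^{-n};q)_k\,(q^{z+1};q)_k\,(a^{-1}q^{1-z};q)_k} {(q;q)_k\,(q^{-2n};q)_k\,(a^{-1/2}q^{3/2};q)_k\,(-a^{-1/2}q^{3/2};q)_k}\,q^k, \] and \[ \frac{(q^{z+2};q^2)_n\,(aq^{z-2n};q^2)_n}{(q^{z+1};q)_n\,(aq^{z-n};q)_n} =\sum_{k=0}^n \frac{(q^{-n};q)_k\,(q^{n+1};q)_k\,(a^{1/2}q^{-n-1/2};q)_k\,(-a^{1/2}q^{-n-1/2};q)_k} {(q;q)_k\,(-q;q)_k\,(q^{-z-n};q)_k\,(aq^{z-n};q)_k}\,q^k. \]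
   Context: For a variable $u$, a base $p$ and a nonnegative integer $n$, the shifted factorial is $(u;p)_0=1$ and $(u;p)_n=(1-u)(1-up)\cdots(1-up^{n-1})$; it is used here with bases $p=q$ and $p=q^2$. Powers such as $q^{z}$ and $q^{1/2}$ are understood formally (i.e., $q^{z}$ and $q^{1/2}$ are treated as variables). *)

From HB Require Import structures.
From mathcomp Require Import all_boot all_order all_algebra.
Set Implicit Arguments. Unset Strict Implicit. Unset Printing Implicit Defensive.
Import Order.TTheory GRing.Theory Num.Theory.
Local Open Scope ring_scope.

Definition qpoch {R : ringType} (u p : R) (n : nat) : R :=
  \prod_(i < n) (1 - u * p ^+ i).

(* Both identities come from one expansion.  Put P_k = (Zq;q)_k (Aq/Z;q)_k.
   Multiplication by (1 - Zq^(2m+2))(1 - Aq^(2m+2)/Z) sends P_k to a combination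
   of P_k and P_(k+1), so by induction on m
     (Zq^2;q^2)_m (Aq^2/Z;q^2)_m
       = sum_k q^C(k+1,2) (Aq^(2k+3);q^2)_(m-k) (q^(k+1);q)_(2m-2k) / (q^2;q^2)_(m-k) P_k.
   With A = 1/a and m = n, dividing by (q;q^2)_n (q^3/a;q^2)_n turns the coefficients
   into the summands of the first identity; reading the sum backwards and reversing
   (cq^-n;q)_n = (-c)^n q^-C(n+1,2) (q/c;q)_n gives the second.  Coefficients are
   identified through the ratio of consecutive terms, after the square roots of q and
   a are eliminated with (x;q)_k (-x;q)_k = (x^2;q^2)_k. *)

From HB Require Import structures.
From mathcomp Require Import all_boot all_order all_algebra ring zify.
Import Order.TTheory GRing.Theory Num.Theory.
Local Open Scope ring_scope.
Set Implicit Arguments. Unset Strict Implicit.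

Lemma exprMC (R : pzSemiRingType) (x : R) m n : x ^+ (m * n) = (x ^+ n) ^+ m.
Proof. by rewrite mulnC exprM. Qed.

Section QPochhammer.
Variable R : comNzRingType.
Implicit Types u p : R.

Lemma qpoch0 u p : qpoch u p 0 = 1.
Proof. by rewrite /qpoch big_ord0. Qed.

Lemma qpochS u p n : qpoch u p n.+1 = qpoch u p n * (1 - u * p ^+ n).
Proof. by rewrite /qpoch big_ord_recr. Qed.

Lemma qpochSl u p n : qpoch u p n.+1 = (1 - u) * qpoch (u * p) p n.
Proof.
rewrite /qpoch big_ord_recl /= expr0 mulr1; congr (_ * _).
by apply: eq_bigr => i _; rewrite exprS mulrA.
Qed.

Lemma qpochN_mul u p n : qpoch u p n * qpoch (- u) p n = qpoch (u ^+ 2) (p ^+ 2) n.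
Proof.
elim: n => [|n IH]; first by rewrite !qpoch0 mulr1.
by rewrite !qpochS -IH -exprM mulnC exprM; ring.
Qed.

Lemma qpoch_odd_even p n :
  qpoch p (p ^+ 2) n * qpoch (p ^+ 2) (p ^+ 2) n = qpoch p p (2 * n).
Proof.
elim: n => [|n IH]; first by rewrite muln0 !qpoch0 mulr1.
have -> : (2 * n.+1 = (2 * n).+2)%N by lia.
by rewrite !qpochS -IH -exprM (exprS p (2 * n)); ring.
Qed.

End QPochhammer.

Section QPochhammerField.
Variable F : fieldType.
Implicit Types u p : F.

Lemma subr1V_neq0 (x : F) : 1 - x^-1 != 0 -> 1 - x != 0.
Proof. by apply: contra; rewrite subr_eq0 => /eqP <-; rewrite invr1 subrr. Qed.

Lemma qpoch_neq0_leq u p n k : (k <= n)%N -> qpoch u p n != 0 -> qpoch u p k != 0.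
Proof.
elim: n => [|n IH]; first by rewrite leqn0 => /eqP ->.
rewrite leq_eqVlt => /orP [/eqP -> //|]; rewrite ltnS => kn.
by rewrite qpochS mulf_eq0 negb_or => /andP [/IH ->].
Qed.

Lemma qpoch_factor_neq0 u p n i : (i < n)%N -> qpoch u p n != 0 -> 1 - u * p ^+ i != 0.
Proof.
by move=> lt_in /(qpoch_neq0_leq lt_in); rewrite qpochS mulf_eq0 negb_or => /andP [].
Qed.

(* Each factor 1 - p^(2i+2) of (p^2;p^2)_n is a factor either of (p;p)_n or,
   up to a unit, of (p^-2n;p)_n. *)
Lemma qpoch_sq_neq0 p n : p != 0 -> qpoch p p n != 0 -> qpoch (p ^- (2 * n)) p n != 0 ->
  qpoch (p ^+ 2) (p ^+ 2) n != 0.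
Proof.
move=> p0 h1 h2; apply/prodf_neq0 => i _.
have lt_in := ltn_ord i; move: (nat_of_ord i) lt_in => {}i lt_in.
rewrite -exprM -exprD addnC.
case: (leqP (2 * i + 2) n) => hi.
  have := qpoch_factor_neq0 (i := (2 * i + 1)%N) _ h1; rewrite -exprS -addnS.
  by apply; lia.
set l := (2 * n - (2 * i + 2))%N.
have lt_ln : (l < n)%N by rewrite /l; lia.
have := qpoch_factor_neq0 lt_ln h2; rewrite (_ : 2 * n = l + (2 * i + 2))%N; last by lia.
rewrite exprD; apply: contra => /eqP h.
have -> : p ^+ (2 * i + 2) = 1 by apply/eqP; rewrite -subr_eq0 -opprB h oppr0.
by rewrite mulr1 mulVf ?subrr // expf_neq0.
Qed.

Lemma qpochN_mulV p n k :
  qpoch (p ^- n) p k * qpoch (- p ^- n) p k = qpoch (p ^- (2 * n)) (p ^+ 2) k.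
Proof. by rewrite qpochN_mul exprVn exprAC -exprM. Qed.

Lemma qpoch_rev c p m : c != 0 -> p != 0 ->
  qpoch (c * p ^- m) p m = (- c) ^+ m * (p ^+ 'C(m.+1, 2))^-1 * qpoch (c^-1 * p) p m.
Proof.
move=> c0 p0; elim: m => [|m IH].
  by rewrite !qpoch0 expr0 bin_small // expr0 invr1 !mulr1.
have pm : p ^+ m != 0 by rewrite expf_neq0.
have pB : p ^+ 'C(m.+1, 2) != 0 by rewrite expf_neq0.
rewrite qpochSl (_ : c * p ^- m.+1 * p = c * p ^- m); last first.
  by rewrite exprS; field; rewrite pm p0.
rewrite IH qpochS (binS m.+1 1) bin1 exprD (exprS (- c)) (exprS p m).
move: (p ^+ 'C(m.+1, 2)) pB => B pB.
by field; rewrite c0 pm p0 pB.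
Qed.

End QPochhammerField.

Section ZCoef.
Variables (F : fieldType) (q A : F).
Hypothesis q0 : q != 0.

Definition zfactor_hi m k := q * (q ^+ m) ^+ 2 / q ^+ k.

Definition zfactor_lo m k :=
  (1 - q * (q ^+ m) ^+ 2 / q ^+ k) * (1 - q ^+ 3 * (q ^+ m) ^+ 2 * q ^+ k * A).

Definition zcoef k j := q ^+ 'C(k.+1, 2) * qpoch (q ^+ (2 * k + 3) * A) (q ^+ 2) j
  * qpoch (q ^+ k.+1) q (2 * j) / qpoch (q ^+ 2) (q ^+ 2) j.

Lemma zcoefSS i j : 1 - q ^+ 2 * (q ^+ 2) ^+ j != 0 -> qpoch (q ^+ 2) (q ^+ 2) j != 0 ->
  zcoef i.+1 j.+1 = zcoef i.+1 j * zfactor_lo (i.+1 + j)%N i.+1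
                    + zcoef i j.+1 * zfactor_hi (i.+1 + j)%N i.
Proof.
move=> h1 h2.
have qi : q ^+ i != 0 by rewrite expf_neq0.
rewrite /zcoef /zfactor_lo /zfactor_hi.
rewrite [in LHS](@qpochS _ (q ^+ 2)) [in LHS](@qpochS _ (q ^+ (2 * i.+1 + 3) * A)).
rewrite [in X in _ = _ + X](@qpochS _ (q ^+ 2)) [in X in _ = _ + X]qpochSl.
have -> : (2 * j.+1 = (2 * j).+2)%N by lia.
rewrite ![in LHS](@qpochS _ (q ^+ i.+2)).
rewrite [in X in _ = _ + X](@qpochSl _ (q ^+ i.+1)).
rewrite [in X in _ = _ + X](@qpochS _ (q ^+ i.+1 * q)).
have -> : q ^+ (2 * i + 3) * A * q ^+ 2 = q ^+ (2 * i.+1 + 3) * A.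
  by rewrite -mulrA (mulrC A) mulrA -exprD; congr (_ ^+ _ * _); lia.
rewrite -exprSr (binS i.+1 1) bin1 !exprD (exprS q (2 * j)) !exprMC !(exprAC q 2 j) !(exprS q i.+1) !(exprS q i).
rewrite (exprAC q 2 j) in h1.
by field; rewrite qi q0 exprMn h1 h2.
Qed.

Lemma zcoef0S m : qpoch (q ^+ 2) (q ^+ 2) m.+1 != 0 ->
  zcoef 0 m.+1 = zcoef 0 m * zfactor_lo m 0.
Proof.
rewrite qpochS mulf_eq0 negb_or => /andP [hG h1].
rewrite /zcoef /zfactor_lo (@qpochS _ (q ^+ (2 * 0 + 3) * A)) (@qpochS _ (q ^+ 2)).
have -> : (2 * m.+1 = (2 * m).+2)%N by lia.
rewrite !(@qpochS _ (q ^+ 1)) !exprMC (exprS q (2 * m)) exprMC !(exprAC q 2 m).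
rewrite (exprAC q 2 m) in h1.
by field; rewrite oner_neq0 hG exprMn h1.
Qed.

Lemma zcoefS0 m : zcoef m.+1 0 = zcoef m 0 * zfactor_hi m m.
Proof.
have qm : q ^+ m != 0 by rewrite expf_neq0.
rewrite /zcoef /zfactor_hi !qpoch0 (binS m.+1 1) bin1 exprD exprS.
by field; rewrite qm oner_neq0.
Qed.

Lemma zcoef_ratio k j : qpoch (q ^+ 2) (q ^+ 2) j.+1 != 0 ->
  zcoef k j.+1 * (q ^+ k.+1 * (1 - q ^+ 2 * (q ^+ j) ^+ 2))
  = zcoef k.+1 j * ((1 - q ^+ (2 * k + 3) * A) * (1 - q ^+ k.+1)
                    * (1 - q ^+ k.+2 * (q ^+ j) ^+ 2)).
Proof.
rewrite qpochS mulf_eq0 negb_or => /andP [hG h1].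
have qk : q ^+ k != 0 by rewrite expf_neq0.
rewrite /zcoef (@qpochS _ (q ^+ 2)) (@qpochSl _ (q ^+ (2 * k + 3) * A)).
have -> : (2 * j.+1 = (2 * j).+2)%N by lia.
rewrite (@qpochSl _ (q ^+ k.+1)) (@qpochS _ (q ^+ k.+1 * q)).
have -> : q ^+ (2 * k + 3) * A * q ^+ 2 = q ^+ (2 * k.+1 + 3) * A.
  by rewrite -mulrA (mulrC A) mulrA -exprD; congr (_ ^+ _ * _); lia.
rewrite -exprSr (binS k.+1 1) bin1 (exprD q 'C(k.+1, 2)).
rewrite !exprD ?exprMC !(exprAC q 2 j) !(exprS q k.+1) !(exprS q k).
rewrite (exprAC q 2 j) in h1.
by field; rewrite exprMn h1 hG.
Qed.

End ZCoef.

Section ZExpansion.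
Variables (F : fieldType) (q A Z : F).
Hypotheses (q0 : q != 0) (Z0 : Z != 0).

Definition zbasis k := qpoch (Z * q) q k * qpoch (A * q * Z^-1) q k.

Definition zprod m := qpoch (Z * q ^+ 2) (q ^+ 2) m * qpoch (A * q ^+ 2 * Z^-1) (q ^+ 2) m.

Definition zfactor m :=
  (1 - Z * q ^+ 2 * (q ^+ m) ^+ 2) * (1 - A * q ^+ 2 * Z^-1 * (q ^+ m) ^+ 2).

Lemma zprodS m : zprod m.+1 = zprod m * zfactor m.
Proof. by rewrite /zprod /zfactor !qpochS -!exprM mulnC !exprM; ring. Qed.

(* With u = q^(2m+2) and v = q^(k+1):
   (1 - Zu)(1 - Au/Z) = (1 - u/v)(1 - Auv) + (u/v)(1 - Zv)(1 - Av/Z). *)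
Lemma zfactor_zbasis m k :
  zfactor m * zbasis k = zfactor_lo q A m k * zbasis k + zfactor_hi q m k * zbasis k.+1.
Proof.
have qk : q ^+ k != 0 by rewrite expf_neq0.
by rewrite /zfactor /zbasis /zfactor_lo /zfactor_hi !qpochS; field; rewrite qk Z0.
Qed.

Lemma zprod_expansion m : qpoch (q ^+ 2) (q ^+ 2) m != 0 ->
  zprod m = \sum_(k < m.+1) zcoef q A k (m - k) * zbasis k.
Proof.
elim: m => [|m IH] hm.
  by rewrite big_ord1 /zprod /zcoef /zbasis !qpoch0 bin_small // expr0 !mulr1 invr1 mulr1.
rewrite zprodS (IH (qpoch_neq0_leq (leqnSn m) hm)) mulr_suml.
have split_term c k : c * zbasis k * zfactor m
    = c * zfactor_lo q A m k * zbasis k + c * zfactor_hi q m k * zbasis k.+1.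
  by rewrite -mulrA (mulrC (zbasis k)) zfactor_zbasis mulrDr !mulrA.
under eq_bigr do rewrite split_term.
rewrite big_split /= big_ord_recl [in RHS]big_ord_recl /=.
rewrite big_ord_recr [in RHS]big_ord_recr /= subn0 subnn (zcoef0S A q0 hm) /bump /= subnn.
rewrite (zcoefS0 A q0) -!addrA; congr (_ + _); rewrite !addrA; congr (_ + _).
rewrite -big_split /=; apply: eq_bigr => i _; rewrite !add1n subSS -mulrDl; congr (_ * _).
have lt_im := ltn_ord i; move: (nat_of_ord i) lt_im => k lt_km.
rewrite -(subnSK lt_km) (zcoefSS A q0); first by rewrite (subnKC lt_km).
  by apply: (qpoch_factor_neq0 _ hm); lia.
by apply: (qpoch_neq0_leq _ hm); lia.
Qed.

End ZExpansion.

Section FirstIdentity.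
Variables (F : fieldType) (q A : F) (n : nat).
Hypotheses (q0 : q != 0) (hq : qpoch q q n != 0) (hq2n : qpoch (q ^- (2 * n)) q n != 0)
  (hA : qpoch (A * q ^+ 3) (q ^+ 2) n != 0).

Definition coef1 k := qpoch (q ^- (2 * n)) (q ^+ 2) k * q ^+ k
  / (qpoch q q k * qpoch (q ^- (2 * n)) q k * qpoch (A * q ^+ 3) (q ^+ 2) k).

Lemma ratio1_factors_neq0 k j : n = (k.+1 + j)%N ->
  [/\ 1 - q ^+ (2 * k + 3) * A != 0, 1 - q ^+ k.+1 != 0
     & 1 - q ^+ k.+2 * (q ^+ j) ^+ 2 != 0].
Proof.
move=> en; have lt_kn : (k < n)%N by rewrite en; lia.
split.
- rewrite (_ : q ^+ (2 * k + 3) * A = A * q ^+ 3 * (q ^+ 2) ^+ k).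
    exact: qpoch_factor_neq0 lt_kn hA.
  by rewrite exprD exprM; ring.
- by rewrite exprS; exact: qpoch_factor_neq0 lt_kn hq.
apply: subr1V_neq0; have := qpoch_factor_neq0 lt_kn hq2n.
have qk : q ^+ k != 0 by rewrite expf_neq0.
have qj : q ^+ j != 0 by rewrite expf_neq0.
rewrite (_ : q ^- (2 * n) * q ^+ k = (q ^+ k.+2 * (q ^+ j) ^+ 2)^-1) //.
by rewrite en exprMC exprD !exprS; field; rewrite q0 qk qj.
Qed.

Lemma coef1S k j : n = (k.+1 + j)%N ->
  coef1 k.+1 * ((1 - q ^+ (2 * k + 3) * A) * (1 - q ^+ k.+1) * (1 - q ^+ k.+2 * (q ^+ j) ^+ 2))
  = coef1 k * (q ^+ k.+1 * (1 - q ^+ 2 * (q ^+ j) ^+ 2)).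
Proof.
move=> en; have lt_kn : (k < n)%N by rewrite en; lia.
have [e1 e2 e3] := ratio1_factors_neq0 en.
have d1 := qpoch_neq0_leq (ltnW lt_kn) hq.
have d2 := qpoch_neq0_leq (ltnW lt_kn) hq2n.
have dA := qpoch_neq0_leq (ltnW lt_kn) hA.
have qk : q ^+ k != 0 by rewrite expf_neq0.
have qj : q ^+ j != 0 by rewrite expf_neq0.
rewrite /coef1 !qpochS -(exprS q k).
rewrite (_ : A * q ^+ 3 * (q ^+ 2) ^+ k = q ^+ (2 * k + 3) * A); last by rewrite exprD exprM; ring.
move: (qpoch q q k) (qpoch (q ^- (2 * n)) q k) (qpoch (A * q ^+ 3) (q ^+ 2) k) d1 d2 dA.
move=> D1 D2 DA d1 d2 dA.
move: (qpoch (q ^- (2 * n)) (q ^+ 2) k) => N.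
rewrite en exprMC (exprD q k.+1 j) (exprAC q 2 k).
rewrite (exprD q (2 * k) 3) exprMC in e1 *.
rewrite !(exprS q k.+1) !(exprS q k) in e2 e3 *.
have {}e3 : q ^+ 2 * q ^+ k * q ^+ j ^+ 2 - 1 != 0.
  by rewrite -oppr_eq0 opprB expr2 -(mulrA q q).
by field; rewrite q0 qk qj d1 d2 dA e1 e2 e3.
Qed.

Lemma coef1_zcoef k : (k <= n)%N ->
  coef1 k * (qpoch q (q ^+ 2) n * qpoch (A * q ^+ 3) (q ^+ 2) n) = zcoef q A k (n - k).
Proof.
have G0 := qpoch_sq_neq0 q0 hq hq2n.
elim: k => [|k IH] le_kn.
  rewrite /coef1 /zcoef !qpoch0 subn0 bin_small // -qpoch_odd_even.
  rewrite (_ : q ^+ (2 * 0 + 3) * A = A * q ^+ 3); last exact: mulrC.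
  by move: (qpoch (q ^+ 2) (q ^+ 2) n) G0 => G G0; rewrite expr1; field; rewrite G0 oner_neq0.
have en : n = (k.+1 + (n - k.+1))%N by rewrite subnKC.
have [e1 e2 e3] := ratio1_factors_neq0 en.
apply: (@mulIf _ ((1 - q ^+ (2 * k + 3) * A) * (1 - q ^+ k.+1)
                  * (1 - q ^+ k.+2 * (q ^+ (n - k.+1)) ^+ 2))).
  by rewrite !mulf_neq0.
rewrite mulrAC coef1S // mulrAC IH ?(ltnW le_kn) // -(subnSK le_kn) zcoef_ratio //.
by rewrite (subnSK le_kn); apply: qpoch_neq0_leq G0; exact: leq_subr.
Qed.

Lemma first_identity Z : Z != 0 -> qpoch q (q ^+ 2) n != 0 ->
  zprod q A Z n / (qpoch q (q ^+ 2) n * qpoch (A * q ^+ 3) (q ^+ 2) n)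
  = \sum_(k < n.+1) coef1 k * zbasis q A Z k.
Proof.
move=> Z0 hqq2.
rewrite (zprod_expansion _ q0 Z0 (qpoch_sq_neq0 q0 hq hq2n)) mulr_suml.
apply: eq_bigr => k _; have le_kn : (k <= n)%N by rewrite -ltnS.
rewrite -(coef1_zcoef le_kn).
by field; rewrite hA hqq2.
Qed.

End FirstIdentity.

Section SecondIdentity.
Variables (F : fieldType) (q a Z : F) (n : nat).
Hypotheses (q0 : q != 0) (a0 : a != 0) (Z0 : Z != 0)
  (hZ : qpoch (Z * q) q n != 0) (haZ : qpoch (a * Z * q ^- n) q n != 0)
  (hqq : qpoch (q ^+ 2) (q ^+ 2) n != 0) (hZn : qpoch (Z^-1 * q ^- n) q n != 0).

Definition term2 k := qpoch (q ^- n) q k * qpoch (q ^+ n.+1) q k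
  * qpoch (a * q ^- (2 * n + 1)) (q ^+ 2) k
  / (qpoch (q ^+ 2) (q ^+ 2) k * qpoch (Z^-1 * q ^- n) q k * qpoch (a * Z * q ^- n) q k)
  * q ^+ k.

Lemma term2S i j : n = (j.+1 + i)%N ->
  term2 i.+1 * (q ^+ j.+1 * (1 - q ^+ 2 * (q ^+ i) ^+ 2) * (1 - Z * q * q ^+ j)
                * (1 - a^-1 * q * Z^-1 * q ^+ j))
  = term2 i * ((1 - q ^+ (2 * j + 3) * a^-1) * (1 - q ^+ j.+1) * (1 - q ^+ j.+2 * (q ^+ i) ^+ 2)).
Proof.
move=> en; have lt_in : (i < n)%N by rewrite en; lia.
have d1 := qpoch_neq0_leq (ltnW lt_in) hqq.
have d2 := qpoch_neq0_leq (ltnW lt_in) hZn.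
have d3 := qpoch_neq0_leq (ltnW lt_in) haZ.
have f1 := qpoch_factor_neq0 lt_in hqq.
have f2 := qpoch_factor_neq0 lt_in hZn.
have f3 := qpoch_factor_neq0 lt_in haZ.
rewrite /term2 !qpochS.
move: (qpoch (q ^+ 2) (q ^+ 2) i) (qpoch (Z^-1 * q ^- n) q i) (qpoch (a * Z * q ^- n) q i) d1 d2 d3.
move=> D1 D2 D3 d1 d2 d3.
move: (qpoch (q ^- n) q i) (qpoch (q ^+ n.+1) q i) (qpoch (a * q ^- (2 * n + 1)) (q ^+ 2) i).
move=> N1 N2 N3.
have qi : q ^+ i != 0 by rewrite expf_neq0.
have qj : q ^+ j != 0 by rewrite expf_neq0.
have E1 : q ^+ (j.+1 + i) = q * q ^+ j * q ^+ i by rewrite addSn exprS exprD mulrA.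
have E2 : q ^+ (j.+1 + i).+1 = q * (q * q ^+ j * q ^+ i) by rewrite exprS E1.
have E3 : q ^+ (2 * (j.+1 + i) + 1) = q * (q * q ^+ j * q ^+ i) ^+ 2.
  by rewrite addn1 exprS exprMC E1.
rewrite en E3 E2 E1 (exprAC q 2 i) in f1 f2 f3 *.
rewrite (exprD q (2 * j) 3) exprMC !(exprS q j.+1) (exprS q j) (exprS q i).
have factor_neq0 (x y c : F) : x = y * c -> x != 0 -> y != 0.
  by move=> ->; rewrite mulf_eq0 negb_or => /andP [].
have {}f1 : 1 - (q * q ^+ i) ^+ 2 != 0 by rewrite exprMn.
have {}f2 : Z * (q * q ^+ j) - 1 != 0.
  by apply: (factor_neq0 _ _ (Z * q * q ^+ j)^-1 _ f2); field; rewrite Z0 q0 qi qj.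
have {}f3 : q * q ^+ j - a * Z != 0.
  by apply: (factor_neq0 _ _ (q * q ^+ j)^-1 _ f3); field; rewrite q0 qi qj.
by field; rewrite a0 d3 d2 d1 Z0 qi qj q0 f3 f2 f1.
Qed.

Lemma qpoch_aZ_rev_neq0 : qpoch (a^-1 * q * Z^-1) q n != 0.
Proof.
move: haZ; rewrite (qpoch_rev _ (mulf_neq0 a0 Z0) q0) mulf_eq0 negb_or => /andP [_].
by rewrite invfM mulrAC.
Qed.

Lemma term2_zcoef i : (i <= n)%N ->
  term2 i * (q ^+ 'C(n.+1, 2) * zbasis q a^-1 Z n)
  = zcoef q a^-1 (n - i) i * zbasis q a^-1 Z (n - i).
Proof.
elim: i => [|i IH] le_in.
  by rewrite /term2 /zcoef !qpoch0 subn0 !mulr1 invr1 !mul1r mulr1.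
have en : n = ((n - i.+1).+1 + i)%N by rewrite subnSK // subnK // ltnW.
have lt_jn : (n - i.+1 < n)%N by lia.
rewrite -(subnSK le_in) in IH.
have := qpoch_factor_neq0 lt_jn hZ; have := qpoch_factor_neq0 lt_jn qpoch_aZ_rev_neq0.
move: (n - i.+1)%N en IH lt_jn => j en IH lt_jn fa fZ.
have fq : 1 - q ^+ 2 * (q ^+ i) ^+ 2 != 0.
  by rewrite -exprAC; exact: qpoch_factor_neq0 le_in hqq.
apply: (@mulIf _ (q ^+ j.+1 * (1 - q ^+ 2 * (q ^+ i) ^+ 2) * (1 - Z * q * q ^+ j)
                  * (1 - a^-1 * q * Z^-1 * q ^+ j))).
  by rewrite !mulf_neq0 // expf_neq0.
rewrite mulrAC term2S // mulrAC (IH (ltnW le_in)) /zbasis !qpochS.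
have := zcoef_ratio a^-1 q0 j (qpoch_neq0_leq le_in hqq).
move: (zcoef q a^-1 j i.+1) (zcoef q a^-1 j.+1 i) => c0 c1 ratio.
transitivity (qpoch (Z * q) q j * (1 - Z * q * q ^+ j) * qpoch (a^-1 * q * Z^-1) q j
              * (1 - a^-1 * q * Z^-1 * q ^+ j)
              * (c1 * ((1 - q ^+ (2 * j + 3) * a^-1) * (1 - q ^+ j.+1)
                       * (1 - q ^+ j.+2 * (q ^+ i) ^+ 2)))); first by ring.
by rewrite -ratio; ring.
Qed.

Lemma second_identity :
  qpoch (Z * q ^+ 2) (q ^+ 2) n * qpoch (a * Z * q ^- (2 * n)) (q ^+ 2) n
    / (qpoch (Z * q) q n * qpoch (a * Z * q ^- n) q n)
  = \sum_(k < n.+1) term2 k.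
Proof.
have hP := qpoch_aZ_rev_neq0.
have aZ0 : a * Z != 0 by rewrite mulf_neq0.
have C0 : q ^+ 'C(n.+1, 2) != 0 by rewrite expf_neq0.
apply: (@mulIf _ (q ^+ 'C(n.+1, 2) * zbasis q a^-1 Z n)); first by rewrite !mulf_neq0.
rewrite mulr_suml (reindex_inj rev_ord_inj) /=.
rewrite (eq_bigr (fun i : 'I_n.+1 => zcoef q a^-1 i (n - i) * zbasis q a^-1 Z i)); last first.
  move=> i _; have le_in : (i <= n)%N by rewrite -ltnS.
  by rewrite subSS term2_zcoef ?leq_subr // subKn.
rewrite -zprod_expansion // /zprod /zbasis (exprM q 2 n).
rewrite (qpoch_rev _ aZ0 (expf_neq0 2 q0)) (qpoch_rev _ aZ0 q0) exprAC.
have invaZ x : (a * Z)^-1 * x = a^-1 * x * Z^-1 by rewrite invfM mulrAC.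
rewrite !invaZ.
move: (qpoch (Z * q) q n) (qpoch (a^-1 * q * Z^-1) q n) hZ hP => P1 P2 P10 P20.
have sgn0 : (- (a * Z)) ^+ n != 0 by rewrite expf_neq0 // oppr_eq0.
by move: (q ^+ 'C(n.+1, 2)) C0 => B B0; field; rewrite sgn0 B0 P10 P20.
Qed.

End SecondIdentity.

Section HalfPowers.
Variables (F : fieldType) (Q s : F).

Lemma qpochN_mul_half k :
  qpoch (s^-1 * Q ^+ 3) (Q ^+ 2) k * qpoch (- (s^-1 * Q ^+ 3)) (Q ^+ 2) k
  = qpoch ((s ^+ 2)^-1 * (Q ^+ 2) ^+ 3) ((Q ^+ 2) ^+ 2) k.
Proof. by rewrite qpochN_mul exprMn exprVn -!exprM. Qed.

Lemma qpochN_mul_half_inv n k :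
  qpoch (s * Q ^- (2 * n + 1)) (Q ^+ 2) k * qpoch (- (s * Q ^- (2 * n + 1))) (Q ^+ 2) k
  = qpoch (s ^+ 2 * (Q ^+ 2) ^- (2 * n + 1)) ((Q ^+ 2) ^+ 2) k.
Proof. by rewrite qpochN_mul exprMn exprVn exprAC -exprM. Qed.

End HalfPowers.

(* Q = q^(1/2), s = a^(1/2) and Z = q^z. *)
Theorem mainTheorem2 (R : numClosedFieldType) (n : nat) (Q s Z : R) :
  Q != 0 -> s != 0 -> Z != 0 ->
  let q := Q ^+ 2 in let a := s ^+ 2 in
  (qpoch q (q ^+ 2) n != 0 ->
   qpoch (a^-1 * q ^+ 3) (q ^+ 2) n != 0 ->
   qpoch q q n != 0 ->
   qpoch (q ^- (2 * n)) q n != 0 ->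
   qpoch (s^-1 * Q ^+ 3) q n != 0 ->
   qpoch (- (s^-1 * Q ^+ 3)) q n != 0 ->
   qpoch (Z * q ^+ 2) (q ^+ 2) n * qpoch (a^-1 * q ^+ 2 * Z^-1) (q ^+ 2) n
     / (qpoch q (q ^+ 2) n * qpoch (a^-1 * q ^+ 3) (q ^+ 2) n)
   = \sum_(0 <= k < n.+1)
       qpoch (q ^- n) q k * qpoch (- q ^- n) q k * qpoch (Z * q) q k
         * qpoch (a^-1 * q * Z^-1) q k
       / (qpoch q q k * qpoch (q ^- (2 * n)) q k * qpoch (s^-1 * Q ^+ 3) q k
          * qpoch (- (s^-1 * Q ^+ 3)) q k)
       * q ^+ k)
  /\
  (qpoch (Z * q) q n != 0 ->
   qpoch (a * Z * q ^- n) q n != 0 ->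
   qpoch q q n != 0 ->
   qpoch (- q) q n != 0 ->
   qpoch (Z^-1 * q ^- n) q n != 0 ->
   qpoch (Z * q ^+ 2) (q ^+ 2) n * qpoch (a * Z * q ^- (2 * n)) (q ^+ 2) n
     / (qpoch (Z * q) q n * qpoch (a * Z * q ^- n) q n)
   = \sum_(0 <= k < n.+1)
       qpoch (q ^- n) q k * qpoch (q ^+ n.+1) q k
         * qpoch (s * Q ^- (2 * n + 1)) q k * qpoch (- (s * Q ^- (2 * n + 1))) q k
       / (qpoch q q k * qpoch (- q) q k * qpoch (Z^-1 * q ^- n) q k
          * qpoch (a * Z * q ^- n) q k)
       * q ^+ k).
Proof.
move=> Q0 s0 Z0 q a; have q0 : q != 0 by rewrite expf_neq0.
rewrite big_mkord [in X in _ /\ X]big_mkord.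
split=> [hqq2 ha hq hq2n _ _ | hZ haZ hq hqN hZn].
  rewrite (first_identity q0 hq hq2n ha Z0 hqq2); apply: eq_bigr => k _.
  rewrite /coef1 /zbasis -(qpochN_mulV q n k) -qpochN_mul_half !invfM; ring.
have hqq : qpoch (q ^+ 2) (q ^+ 2) n != 0 by rewrite -qpochN_mul mulf_neq0.
have a0 : a != 0 by rewrite expf_neq0.
rewrite (second_identity q0 a0 Z0 hZ haZ hqq hZn); apply: eq_bigr => k _.
rewrite /term2 -qpochN_mul_half_inv -(qpochN_mul q q k) !invfM; ring.
Qed.
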